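(* Let $X$ be a $W$-space (for example, a realcompact space). Then the strong dual of $C_k(X)$ has a fundamental bounded resolution if and only if $X$ has a fundamental compact resolution.
   Context: $C_k(X)$ is the space of continuous real-valued functions on the Tychonoff space $X$ with the compact-open topology; its strong dual carries the topology of uniform convergence on bounded subsets of $C_k(X)$. A subset $A\subseteq X$ is $b$-bounding if for every bounded subset $B$ of $C_k(X)$, $\sup\{|f(x)|:x\in A,f\in B\}<\infty$; $X$ is a $W$-space if every $b$-bounding subset of $X$ is relatively compact. Order $\mathbb{N}^{\mathbb{N}}$ pointwise. A resolution is a family $\{A_\alpha:\alpha\in\mathbb{N}^{\mathbb{N}}\}$ covering the space with $A_\alpha\subseteq A_\beta$ for $\alpha\le\beta$. A fundamental compact resolution of $X$ is a resolution of compact sets such that every compact subset of $X$ lies in some member; a fundamental bounded resolution of a locally convex space is a resolution of bounded sets such that every bounded set lies in some member. *)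

From HB Require Import structures.
From mathcomp Require Import all_boot all_order all_algebra.
From mathcomp Require Import all_classical all_reals all_analysis.
Set Implicit Arguments. Unset Strict Implicit. Unset Printing Implicit Defensive.
Import Order.TTheory GRing.Theory Num.Theory.
Local Open Scope classical_set_scope.
Local Open Scope ring_scope.

Section Defs.
Variables (R : realType) (X : topologicalType).

Definition tychonoff_space : Prop :=
  completely_regular_space X /\ hausdorff_space X.

Definition Cfun : set (X -> R) := [set f : X -> R | continuous (f : X -> R^o)].

(* Bounded subsets of C_k(X): the compact-open topology on C(X) is the
   locally convex topology of the seminorms p_K(f) = sup_{x in K} |f x|,
   K compact; a set is bounded iff every p_K is bounded on it. *)
Definition Ck_bounded (B : set (X -> R)) : Prop :=
  B `<=` Cfun /\
  forall K : set X, compact K ->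
    exists M : R, forall f x, B f -> K x -> `|f x| <= M.

Definition b_bounding (A : set X) : Prop :=
  forall B : set (X -> R), Ck_bounded B ->
    exists M : R, forall f x, B f -> A x -> `|f x| <= M.

Definition W_space : Prop :=
  forall A : set X, b_bounding A -> compact (closure A).

(* A functional
   is represented by phi : (X -> R) -> R, normalised to be 0 outside C(X)
   (so each functional has exactly one representative).  Continuity of a
   linear functional: phi is bounded on a basic 0-neighbourhood
   {f in C(X) | forall x in K, |f x| <= eps} of the compact-open topology. *)
Definition Ck_dual : set ((X -> R) -> R) :=
  [set phi |
    (forall f g, Cfun f -> Cfun g -> phi (f \+ g) = phi f + phi g) /\
    (forall (a : R) f, Cfun f -> phi (fun x => a * f x) = a * phi f) /\
    (forall f, ~ Cfun f -> phi f = 0) /\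
    (exists K : set X, compact K /\ exists2 eps : R, 0 < eps &
       forall f, Cfun f -> (forall x, K x -> `|f x| <= eps) -> `|phi f| <= 1)].

(* Bounded subsets of the strong dual (topology of uniform convergence on
   bounded subsets of C_k(X), given by the seminorms
   q_B(phi) = sup_{f in B} |phi f|, B bounded). *)
Definition strong_dual_bounded (A : set ((X -> R) -> R)) : Prop :=
  A `<=` Ck_dual /\
  forall B : set (X -> R), Ck_bounded B ->
    exists M : R, forall phi f, A phi -> B f -> `|phi f| <= M.

End Defs.

Definition baire_le (a b : nat -> nat) : Prop := forall n, (a n <= b n)%N.

Definition resolution {T : Type} (S : set T) (F : (nat -> nat) -> set T) : Prop :=
  (forall a, F a `<=` S) /\
  (forall a b, baire_le a b -> F a `<=` F b) /\
  (forall t, S t -> exists a, F a t).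

Definition fundamental_compact_resolution (X : topologicalType) : Prop :=
  exists K : (nat -> nat) -> set X,
    resolution setT K /\ (forall a, compact (K a)) /\
    (forall C : set X, compact C -> exists a, C `<=` K a).

Definition strong_dual_fundamental_bounded_resolution
    (R : realType) (X : topologicalType) : Prop :=
  exists A : (nat -> nat) -> set ((X -> R) -> R),
    resolution (@Ck_dual R X) A /\
    (forall a, strong_dual_bounded (A a)) /\
    (forall B, strong_dual_bounded B -> exists a, B `<=` A a).

From HB Require Import structures.
From mathcomp Require Import all_boot all_order all_algebra.
From mathcomp Require Import all_classical all_reals all_analysis.
From mathcomp Require Import lra.
Set Implicit Arguments. Unset Strict Implicit. Unset Printing Implicit Defensive.
Import Order.TTheory GRing.Theory Num.Theory.
Local Open Scope classical_set_scope.
Local Open Scope ring_scope.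

(* A bounded resolution (A_a) of the strong dual yields the compact sets
   K_a = closure {x | delta_x \in A_a}: they are b-bounding, hence compact in a
   W-space, and they swallow every compact K because {delta_x | x \in K} is
   strongly bounded.  Conversely, a compact resolution (K_a) yields the polars
   {phi | |phi f| <= (a 0).+1 * sup_(K (a \o succn)) |f|}, which swallow every
   strongly bounded set A because such an A is equicontinuous: the common zero
   set Z of the ideal of functions g with psi (g h) = 0 for all psi \in A is
   b-bounding (otherwise Urysohn functions concentrated where a bounded family
   of C_k(X) blows up give a bounded family on which A is unbounded), so
   closure Z is compact, and each phi \in A only sees f near closure Z. *)

Definition clamp (R : realDomainType) (d x : R) := Num.max (- d) (Num.min d x).

Lemma clamp_norm (R : realDomainType) (d x : R) : 0 <= d -> `|clamp d x| <= d.
Proof.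
move=> d0; rewrite ler_norml le_max lexx ge_max ge_min lexx /= andbT.
by rewrite (le_trans _ d0) // oppr_le0.
Qed.

Lemma clamp_id (R : realDomainType) (d x : R) : `|x| <= d -> clamp d x = x.
Proof. by rewrite ler_norml => /andP[dx xd]; rewrite /clamp min_r ?max_r. Qed.

Lemma prefix_ubound (R : realDomainType) (c : nat -> R) N :
  exists M, forall n, (n < N)%N -> c n <= M.
Proof.
elim: N => [|N [M HM]]; first by exists 0.
exists (Num.max M (c N)) => n; rewrite ltnS leq_eqVlt => /orP[/eqP->|/HM cnM].
  by rewrite le_max lexx orbT.
by rewrite le_max cnM.
Qed.

Section ContinuousFunctions.
Variables (R : realType) (X : topologicalType).
Local Notation C := (@Cfun R X).

Lemma CfunD f g : C f -> C g -> C (f \+ g).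
Proof. by move=> Cf Cg x; apply: continuousD; [exact: Cf|exact: Cg]. Qed.

Lemma CfunM f g : C f -> C g -> C (fun x => f x * g x).
Proof. by move=> Cf Cg x; apply: (@continuousM R X f g); [exact: Cf|exact: Cg]. Qed.

Lemma Cfun_cst c : C (fun _ => c).
Proof. by move=> x; apply: cvg_cst. Qed.

Lemma CfunZ a f : C f -> C (fun x => a * f x).
Proof. by move=> Cf; apply: CfunM => //; apply: Cfun_cst. Qed.

Lemma CfunB f g : C f -> C g -> C (fun x => f x - g x).
Proof.
move=> Cf Cg; have := CfunD Cf (CfunZ (a := -1) Cg).
by congr C; apply: funext => x /=; rewrite mulN1r.
Qed.

Lemma Cfun_max f g : C f -> C g -> C (fun x => Num.max (f x) (g x)).
Proof. by move=> Cf Cg x; apply: (@continuous_max R X f g); [exact: Cf|exact: Cg]. Qed.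

Lemma Cfun_min f g : C f -> C g -> C (fun x => Num.min (f x) (g x)).
Proof. by move=> Cf Cg x; apply: (@continuous_min R X f g); [exact: Cf|exact: Cg]. Qed.

Lemma Cfun_clamp d f : C f -> C (fun x => clamp d (f x)).
Proof.
by move=> Cf; apply: Cfun_max; [exact: Cfun_cst|apply: Cfun_min; [exact: Cfun_cst|]].
Qed.

Lemma CfunV f : C f -> (forall x, f x != 0) -> C (fun x => (f x)^-1).
Proof. by move=> Cf f0 x; apply: (@continuousV R X f) => //; exact: Cf. Qed.

Lemma Cfun_norm f : C f -> C (fun x => `|f x|).
Proof. by move=> Cf x; apply: cvg_norm; exact: Cf. Qed.

Lemma Cfun_open_preimage f (U : set R^o) : C f -> open U -> open (f @^-1` U).
Proof. by move=> Cf; apply: (continuousP (f : X -> R^o)).1. Qed.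

Lemma Cfun_bounded_on_compact f K : C f -> compact K ->
  exists M, forall y, K y -> `|f y| <= M.
Proof.
move=> Cf cK.
have : compact ((f : X -> R^o) @` K).
  by apply: continuous_compact => //; apply: continuous_subspaceT; exact: Cf.
move=> /compact_bounded [M [_ HM]]; exists (M + 1) => y Ky.
by apply: (HM (M + 1)); [rewrite ltrDl ltr01|exists y].
Qed.

Lemma Ck_bounded_unit_ball : Ck_bounded [set g | C g /\ forall x, `|g x| <= 1].
Proof. by split=> [g []|K _]; last by exists 1 => f x [_ f1] _; exact: f1. Qed.

Lemma Ck_bounded_range_eventually0 (g : nat -> X -> R) : (forall n, C (g n)) ->
  (forall K, compact K -> exists N, forall n y, (N <= n)%N -> K y -> g n y = 0) ->
  Ck_bounded (range g).
Proof.
move=> Cg g0; split=> [_ [n _ <-] //|K cK].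
have [N gN] := g0 K cK.
have [c gc] := choice (fun n => Cfun_bounded_on_compact (Cg n) cK).
have [M cM] := prefix_ubound c N.
exists (Num.max M 0) => _ y [n _ <-] Ky.
have [ltnN|leNn] := ltnP n N.
  by rewrite le_max (le_trans (gc n y Ky) (cM n ltnN)).
by rewrite gN // normr0 le_max lexx orbT.
Qed.

(* Otherwise the sets K `&` [set y | G y <= 1], for G >= 0 in P, form a proper
   filter base on K; at a cluster point y some g \in P has g y != 0, and a
   multiple of g ^+ 2 exceeds 1 near y. *)
Lemma ideal_gt1_on_compact (P : set (X -> R)) (K : set X) :
  P `<=` C -> P (fun _ => 0) -> (forall f g, P f -> P g -> P (f \+ g)) ->
  (forall g k, P g -> C k -> P (fun x => g x * k x)) ->
  compact K -> (forall y, K y -> exists2 g, P g & g y != 0) ->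
  exists G, [/\ P G, (forall x, 0 <= G x) & (forall y, K y -> 1 < G y)].
Proof.
move=> PC P0 PD PM cK Knz; apply: contrapT => noG.
pose Pnn := [set G | P G /\ forall x, 0 <= G x].
pose low (G : X -> R) := K `&` [set y | G y <= 1].
have low_nz G : Pnn G -> low G !=set0.
  move=> [PG G0]; apply: contrapT => lowG0; apply: noG; exists G; split=> // y Ky.
  by rewrite ltNge; apply/negP => Gy1; apply: lowG0; exists y.
have lowF : Filter (filter_from Pnn low).
  apply: filter_from_filter; first by exists (fun _ => 0); split.
  move=> G1 G2 [PG1 G10] [PG2 G20]; exists (G1 \+ G2).
    by split=> [|x]; [exact: PD|exact: addr_ge0].
  move=> y [Ky /= G12y]; split; split=> //.
    by apply: le_trans G12y; rewrite lerDl.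
  by apply: le_trans G12y; rewrite lerDr.
have lowPF : ProperFilter (filter_from Pnn low) by exact: filter_from_proper.
have [y [Ky clu_y]] : K `&` cluster (filter_from Pnn low) !=set0.
  by apply: cK; exists (fun _ => 0); [split|move=> y []].
have [g Pg gy0] := Knz y Ky.
pose G x := g x * (2 / g y ^+ 2 * g x).
have Gnn : Pnn G.
  split=> [|x]; first by apply: PM => //; apply: CfunZ; exact: PC.
  by rewrite /G mulrCA -expr2 mulr_ge0 ?sqr_ge0 ?divr_ge0 ?sqr_ge0.
have Gy : G y = 2 by rewrite /G mulrCA -expr2 divfK // expf_neq0.
have G_gt1 : nbhs y [set x | 1 < G x].
  apply: open_nbhs_nbhs; split; last by rewrite /= Gy ltr1n.
  exact: Cfun_open_preimage (PC _ Gnn.1) (@open_gt R 1).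
have lowG : filter_from Pnn low (low G) by exists G.
have [x [[_ /= Gx1] /= Gx_gt1]] := clu_y _ _ lowG G_gt1.
by move: Gx_gt1; rewrite ltNge Gx1.
Qed.

End ContinuousFunctions.

Section Dual.
Variables (R : realType) (X : topologicalType).
Local Notation C := (@Cfun R X).
Local Notation D := (@Ck_dual R X).

Lemma Ck_dualD phi f g : D phi -> C f -> C g -> phi (f \+ g) = phi f + phi g.
Proof. by case=> phiD _; apply: phiD. Qed.

Lemma Ck_dualZ phi a f : D phi -> C f -> phi (fun x => a * f x) = a * phi f.
Proof. by case=> _ [phiZ _]; apply: phiZ. Qed.

Lemma Ck_dual0 phi : D phi -> phi (fun _ => 0) = 0.
Proof.
move=> Dphi; have := Ck_dualZ 0 Dphi (@Cfun_cst R X 0).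
by rewrite [_ * phi _]mul0r mul0r.
Qed.

Lemma Ck_dualB phi f g : D phi -> C f -> C g ->
  phi (fun x => f x - g x) = phi f - phi g.
Proof.
move=> Dphi Cf Cg.
have -> : (fun x => f x - g x) = f \+ (fun x => -1 * g x).
  by apply: funext => x /=; rewrite mulN1r.
by rewrite Ck_dualD ?Ck_dualZ ?mulN1r //; exact: CfunZ.
Qed.

Lemma Ck_dual_eq0 phi (K : set X) eps : D phi -> 0 < eps ->
  (forall f, C f -> (forall x, K x -> `|f x| <= eps) -> `|phi f| <= 1) ->
  forall f, C f -> (forall x, K x -> f x = 0) -> phi f = 0.
Proof.
move=> Dphi eps0 phiK f Cf f0; apply/eqP; apply: contraT => phif0.
have := phiK _ (CfunZ (a := 2 / `|phi f|) Cf).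
rewrite Ck_dualZ // normrM ger0_norm ?divr_ge0 // mulfVK ?normr_eq0 //.
rewrite [2 <= 1]leNgt ltr1n; apply => x Kx.
by rewrite f0 // mulr0 normr0 ltW.
Qed.

Definition Ck_dirac (x : X) : (X -> R) -> R :=
  fun f => if `[< C f >] then f x else 0.

Lemma Ck_diracE x f : C f -> Ck_dirac x f = f x.
Proof. by rewrite /Ck_dirac; case: asboolP. Qed.

Lemma Ck_dirac_dual x : D (Ck_dirac x).
Proof.
split; [|split; [|split]].
- by move=> f g Cf Cg; rewrite !Ck_diracE //; exact: CfunD.
- by move=> a f Cf; rewrite !Ck_diracE //; exact: CfunZ.
- by move=> f Cf; rewrite /Ck_dirac; case: asboolP.
- exists [set x]; split; first exact: compact_set1.
  by exists 1 => // f Cf f1; rewrite Ck_diracE //; exact: f1.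
Qed.

Lemma Ck_dirac_b_bounding (A : set ((X -> R) -> R)) :
  strong_dual_bounded A -> b_bounding R [set x | A (Ck_dirac x)].
Proof.
move=> [_ Abd] B Bbd; have [M HM] := Abd B Bbd.
by exists M => f x Bf Ax; rewrite -(Ck_diracE x (Bbd.1 _ Bf)); exact: HM.
Qed.

Lemma Ck_dirac_compact_bounded (K : set X) :
  compact K -> strong_dual_bounded (Ck_dirac @` K).
Proof.
move=> cK; split=> [_ [x _ <-]|B [BC BK]]; first exact: Ck_dirac_dual.
have [M HM] := BK K cK.
by exists M => _ f [x Kx <-] Bf; rewrite Ck_diracE ?HM //; exact: BC.
Qed.

Definition Ck_polar (K : set X) (c : R) : set ((X -> R) -> R) :=
  [set phi | D phi /\ forall f M, C f -> 0 < M ->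
     (forall x, K x -> `|f x| <= M) -> `|phi f| <= c * M].

Lemma Ck_polarS (K K' : set X) c c' : K `<=` K' -> c <= c' ->
  Ck_polar K c `<=` Ck_polar K' c'.
Proof.
move=> KK' cc' phi [Dphi phiK]; split=> // f M Cf M0 fM.
apply: le_trans (phiK f M Cf M0 (fun x Kx => fM x (KK' x Kx))) _.
by rewrite ler_wpM2r // ltW.
Qed.

Lemma Ck_polar_bounded K c : compact K -> strong_dual_bounded (Ck_polar K c).
Proof.
move=> cK; split=> [phi []//|B [BC Bbd]].
have [MB HMB] := Bbd K cK.
exists (c * Num.max MB 1) => phi f [_ phiK] Bf.
apply: phiK; [exact: BC|by rewrite lt_max ltr01 orbT|].
by move=> x Kx; rewrite le_max HMB.
Qed.

Lemma Ck_dual_polar phi : D phi -> exists K c, compact K /\ Ck_polar K c phi.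
Proof.
move=> Dphi; have [_ [_ [_ [K [cK [eps eps0 phiK]]]]]] := Dphi.
exists K, eps^-1; split=> //; split=> // f M Cf M0 fM.
have epsM0 : 0 < eps / M by rewrite divr_gt0.
have : `|phi (fun x => eps / M * f x)| <= 1.
  apply: phiK => [|x Kx]; first exact: CfunZ.
  by rewrite normrM (gtr0_norm epsM0) -ler_pdivlMl // invf_div divfK ?gt_eqF ?fM.
rewrite Ck_dualZ // normrM (gtr0_norm epsM0) -ler_pdivlMl // invf_div.
by rewrite mulr1 mulrC.
Qed.

End Dual.

Lemma fundamental_compact_resolution_of_dual (R : realType) (X : topologicalType) :
  W_space R X -> strong_dual_fundamental_bounded_resolution R X ->
  fundamental_compact_resolution X.
Proof.
move=> hW [A [[_ [Amono Acov]] [Abd Afund]]].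
exists (fun a => closure [set x | A a (@Ck_dirac R X x)]).
split; [split; [by []|split]|split].
- by move=> a b ab; apply: closureS => x; exact: Amono.
- move=> x _; have [a Aa] := Acov _ (@Ck_dirac_dual R X x).
  by exists a; exact: subset_closure.
- by move=> a; apply: hW; exact: Ck_dirac_b_bounding.
- move=> K cK; have [a Ka] := Afund _ (@Ck_dirac_compact_bounded R X _ cK).
  by exists a => x Kx; apply: subset_closure; apply: Ka; exists x.
Qed.

Section Annihilator.
Variables (R : realType) (X : topologicalType) (A : set ((X -> R) -> R)).
Hypothesis Abd : strong_dual_bounded A.
Local Notation C := (@Cfun R X).

Definition annihilator : set (X -> R) :=
  [set g | C g /\ forall psi h, A psi -> C h -> psi (fun x => g x * h x) = 0].

Definition annihilator_zeros : set X :=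
  [set x | forall g, annihilator g -> g x = 0].

Lemma annihilatorC : annihilator `<=` C.
Proof. by move=> g []. Qed.

Lemma annihilator0 : annihilator (fun _ => 0).
Proof.
split=> [|psi h Apsi Ch]; first exact: Cfun_cst.
rewrite -[RHS](Ck_dual0 (Abd.1 _ Apsi)); congr psi.
by apply: funext => x; rewrite mul0r.
Qed.

Lemma annihilatorD f g : annihilator f -> annihilator g -> annihilator (f \+ g).
Proof.
move=> [Cf fA] [Cg gA]; split=> [|psi h Apsi Ch]; first exact: CfunD.
have -> : (fun x => (f \+ g) x * h x) =
          (fun x => f x * h x) \+ (fun x => g x * h x).
  by apply: funext => x /=; rewrite mulrDl.
have Dpsi := Abd.1 _ Apsi.
by rewrite Ck_dualD ?fA ?gA ?addr0 //; exact: CfunM.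
Qed.

Lemma annihilatorM g k : annihilator g -> C k -> annihilator (fun x => g x * k x).
Proof.
move=> [Cg gA] Ck; split=> [|psi h Apsi Ch]; first exact: CfunM.
have -> : (fun x => g x * k x * h x) = (fun x => g x * (k x * h x)).
  by apply: funext => x; rewrite mulrA.
by apply: gA => //; exact: CfunM.
Qed.

Hypothesis crs : completely_regular_space X.

Lemma annihilator_zeros_witness x (V : set X) :
  annihilator_zeros x -> open V -> V x ->
  exists psi phi, [/\ A psi, C phi, (forall y, ~ V y -> phi y = 0) & psi phi != 0].
Proof.
move=> Zx oV Vx.
have /(@uniform_separatorP X R) [u [Cu _ u0 u1]] : uniform_separator [set x] (~` V).
  by apply: crs => [|/(_ Vx)//]; exact: open_closedC.
pose v y := 1 - u y.
have Cv : C v by apply: CfunB; [exact: Cfun_cst|exact: Cu].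
have v_ann : ~ annihilator v.
  move=> /Zx; rewrite /v (_ : u x = 0) ?subr0; last by apply: u0; exists x.
  by move/eqP; rewrite oner_eq0.
apply: contrapT => nowit; apply: v_ann; split=> // psi h Apsi Ch.
apply: contrapT => /eqP psi0; apply: nowit; exists psi, (fun y => v y * h y).
split=> //; first exact: CfunM.
move=> y nVy; rewrite /v (_ : u y = 1) ?subrr ?mul0r //.
by apply: u1; exists y.
Qed.

(* Points x_n \in Z and f_n \in B with |f_n x_n| > n give g_n supported in
   {|f_n| > n} and psi_n \in A with |psi_n g_n| = n; the g_n vanish
   eventually on each compact set, so they form a bounded set. *)
Lemma annihilator_zeros_b_bounding : b_bounding R annihilator_zeros.
Proof.
move=> B [BC Bbd]; apply: contrapT => B_unbounded.
have large n : exists fx : (X -> R) * X,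
    [/\ B fx.1, annihilator_zeros fx.2 & n%:R < `|fx.1 fx.2|].
  apply: contrapT => nofx; apply: B_unbounded; exists n%:R => f x Bf Zx.
  by rewrite leNgt; apply/negP => nfx; apply: nofx; exists (f, x).
have [fx fxP] := choice large.
have wit n : exists pp : ((X -> R) -> R) * (X -> R),
    [/\ A pp.1, C pp.2, (forall y, ~ n%:R < `|(fx n).1 y| -> pp.2 y = 0)
      & pp.1 pp.2 != 0].
  have [Bf Zx fxn] := fxP n.
  have oV := Cfun_open_preimage (Cfun_norm (BC _ Bf)) (@open_gt R n%:R).
  by have [psi [phi wit]] := annihilator_zeros_witness Zx oV fxn; exists (psi, phi).
have [pp ppP] := choice wit.
pose g n y := n%:R / `|(pp n).1 (pp n).2| * (pp n).2 y.
have g_bounded : Ck_bounded (range g).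
  apply: Ck_bounded_range_eventually0 => [n|K cK].
    by apply: CfunZ; have [] := ppP n.
  have [MK fMK] := Bbd K cK.
  exists (Num.truncn MK).+1 => n y leNn Ky.
  have [_ _ pp0 _] := ppP n; rewrite /g pp0 ?mulr0 // => large_y.
  have [Bf _ _] := fxP n.
  have := fMK _ _ Bf Ky; have := truncnS_gt MK.
  have : (Num.truncn MK).+1%:R <= n%:R :> R by rewrite ler_nat.
  lra.
have [M0 gM0] := Abd.2 _ g_bounded.
pose n := (Num.truncn M0).+1.
have [Apn Cpn _ pn0] := ppP n.
have := gM0 _ (g n) Apn (ex_intro2 _ _ n I erefl).
rewrite /g Ck_dualZ; [|exact: Abd.1|exact: Cpn].
rewrite normrM ger0_norm ?divr_ge0 // divfK ?normr_eq0 //.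
by rewrite leNgt truncnS_gt.
Qed.

(* Take G > 1 in the annihilator on the part of phi's carrier outside W and
   k = F / max(G, 1): then F - G k vanishes on the carrier and G k is
   annihilated by phi. *)
Lemma annihilated_off_zeros phi F (W : set X) : A phi -> C F -> open W ->
  closure annihilator_zeros `<=` W -> (forall x, W x -> F x = 0) -> phi F = 0.
Proof.
move=> Aphi CF oW ZW FW; have Dphi := Abd.1 _ Aphi.
have [_ [_ [_ [K [cK [eps eps0 phiK]]]]]] := Dphi.
have [|G [annG G0 G1]] := ideal_gt1_on_compact annihilatorC annihilator0
  annihilatorD annihilatorM (compact_closedI cK (open_closedC oW)).
  move=> y [_ nWy]; apply: contrapT => noG; apply/nWy/ZW/subset_closure => g ann_g.
  by apply: contrapT => /eqP gy0; apply: noG; exists g.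
pose k x := F x / Num.max (G x) 1.
have Ck : C k.
  apply: CfunM => //; apply: CfunV => [|x]; last by rewrite gt_eqF // lt_max ltr01 orbT.
  by apply: Cfun_max; [exact: annihilatorC|exact: Cfun_cst].
have -> : F = (fun x => F x - G x * k x) \+ (fun x => G x * k x).
  by apply: funext => x /=; rewrite subrK.
have CGk : C (fun x => G x * k x) by apply: CfunM => //; exact: annihilatorC.
rewrite Ck_dualD ?annG.2 ?addr0 //; last exact: CfunB.
apply: (Ck_dual_eq0 Dphi eps0 phiK) => [|x Kx]; first exact: CfunB.
have [Wx|nWx] := pselect (W x); first by rewrite /k FW // mul0r mulr0 subr0.
have Gx1 := G1 x (conj Kx nWx).
by rewrite /k max_l ?ltW // mulrCA mulfV ?mulr1 ?subrr // gt_eqF // (lt_trans ltr01).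
Qed.

Hypothesis hW : W_space R X.

Lemma strong_dual_bounded_equicontinuous :
  exists K c, compact K /\ A `<=` Ck_polar K c.
Proof.
have [M0 unitM0] := Abd.2 _ (Ck_bounded_unit_ball R X).
exists (closure annihilator_zeros), (2 * M0).
split=> [|phi Aphi]; first exact: hW annihilator_zeros_b_bounding.
split=> [|f d Cf d0 fd]; first exact: Abd.1.
have Dphi := Abd.1 _ Aphi.
have d2 : 0 < 2 * d by rewrite mulr_gt0.
pose g x := clamp (2 * d) (f x).
have Cg : C g by exact: Cfun_clamp.
have phi_fg : phi f = phi g.
  apply/eqP; rewrite -subr_eq0 -Ck_dualB //; apply/eqP.
  apply: (annihilated_off_zeros (W := [set x | `|f x| < 2 * d])) => //.
  - exact: CfunB.
  - exact: Cfun_open_preimage (Cfun_norm Cf) (@open_lt R (2 * d)).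
  - move=> x /fd fxd /=; rewrite (le_lt_trans fxd) //.
    by rewrite -[X in X < _]mul1r ltr_pM2r // ltr1n.
  - by move=> x /= /ltW fx2d; rewrite /g clamp_id ?subrr.
have g_unit : `|phi (fun x => (2 * d)^-1 * g x)| <= M0.
  apply: unitM0 => //; split=> [|x]; first exact: CfunZ.
  rewrite normrM gtr0_norm ?invr_gt0 // -ler_pdivlMl ?invr_gt0 // invrK mulr1.
  exact/clamp_norm/ltW.
rewrite phi_fg (_ : g = fun x => 2 * d * ((2 * d)^-1 * g x)); last first.
  by apply: funext => x; rewrite mulVKf ?gt_eqF.
rewrite Ck_dualZ //; last exact: CfunZ.
by rewrite normrM gtr0_norm // mulrAC ler_pM2r // ler_pM2l.
Qed.

End Annihilator.

Lemma dual_resolution_of_compact_resolution (R : realType) (X : topologicalType) :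
  completely_regular_space X -> W_space R X -> fundamental_compact_resolution X ->
  strong_dual_fundamental_bounded_resolution R X.
Proof.
move=> crs hW [K [[_ [Kmono _]] [cK Kfund]]].
(* An index a encodes both the compact set K (a \o succn) and the bound
   (a 0).+1. *)
pose A (a : nat -> nat) := @Ck_polar R X (K (a \o succn)) (a 0%N).+1%:R.
have polar_sub K0 c : compact K0 -> exists a, Ck_polar K0 c `<=` A a.
  move=> cK0; have [b K0b] := Kfund _ cK0.
  exists (fun n => if n is n'.+1 then b n' else Num.truncn c).
  by apply: Ck_polarS => //; exact: ltW (truncnS_gt c).
exists A; split; [split; [|split]|split].
- by move=> a phi [].
- move=> a b ab; apply: Ck_polarS; first by apply: Kmono => n; exact: ab.
  by rewrite ler_nat ltnS; exact: ab.
- move=> phi /Ck_dual_polar [K0 [c [cK0 phiK0]]].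
  by have [a K0a] := polar_sub K0 c cK0; exists a; exact: K0a.
- by move=> a; exact: Ck_polar_bounded.
- move=> B Bbd.
  have [K0 [c [cK0 BK0]]] := strong_dual_bounded_equicontinuous Bbd crs hW.
  by have [a K0a] := polar_sub K0 c cK0; exists a => phi /BK0 /K0a.
Qed.

Theorem corollary2p10 (R : realType) (X : topologicalType) :
  tychonoff_space X -> W_space R X ->
  (strong_dual_fundamental_bounded_resolution R X <->
   fundamental_compact_resolution X).
Proof.
move=> [crs _] hW; split; first exact: fundamental_compact_resolution_of_dual.
exact: dual_resolution_of_compact_resolution.
Qed.
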